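(* Let $R,S$ be nonnegative integral vectors such that $\mathcal{A}(R,S)$ is a convex-class, and let $A\in\mathcal{A}(R,S)$. Let $I$ and $I'$ be the horizontal intervals of two different rows of $A$. Then at least one of the following holds: (i) $|I|=|I'|=1$; (ii) $I\subseteq I'$ or $I'\subseteq I$; (iii) $I'$ is a 1-shift of $I$. In particular, if $|I|=k$ and $|I'|\ge k+1$ for some $k\ge1$, then $I\subseteq I'$. The analogous statements hold for the vertical intervals of two different columns of $A$. Moreover, for every interchange applicable to a matrix in $\mathcal{A}(R,S)$, the two rows involved either both contain exactly one $1$ or have horizontal intervals forming a 1-shift pair, and likewise the two columns involved either both contain exactly one $1$ or have vertical intervals forming a 1-shift pair.
   Context: $\mathcal{A}(R,S)$ is the set of $(0,1)$-matrices with row sum vector $R$ and column sum vector $S$. A $(0,1)$-matrix is convex if in every row and column the 1's occur consecutively; $\mathcal{A}(R,S)$ is a convex-class if every matrix in it is convex. For $A=[a_{ij}]$, the horizontal interval of row $i$ is $\{j: a_{ij}=1\}$ and the vertical interval of column $j$ is $\{i: a_{ij}=1\}$. For intervals $I=\{k,k+1,\dots,l\}$ and $I'=\{k+1,\dots,l+1\}$ with $k<l$, $I'$ is called a 1-shift of $I$ and vice versa, and $I,I'$ is a 1-shift pair. An interchange replaces a $2\times2$ submatrix $\begin{bmatrix}1&0\\0&1\end{bmatrix}$ by $\begin{bmatrix}0&1\\1&0\end{bmatrix}$ or vice versa. *)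

From mathcomp Require Import all_boot all_order all_algebra.
Set Implicit Arguments. Unset Strict Implicit. Unset Printing Implicit Defensive.

Definition hint (m n : nat) (A : 'M[bool]_(m, n)) (i : 'I_m) : {set 'I_n} :=
  [set j | A i j].
Definition vint (m n : nat) (A : 'M[bool]_(m, n)) (j : 'I_n) : {set 'I_m} :=
  [set i | A i j].

Definition inClass (m n : nat) (R : 'I_m -> nat) (S : 'I_n -> nat)
  (A : 'M[bool]_(m, n)) : Prop :=
  (forall i, #|hint A i| = R i) /\ (forall j, #|vint A j| = S j).

Definition convex (m n : nat) (A : 'M[bool]_(m, n)) : Prop :=
  (forall (i : 'I_m) (j1 j2 j3 : 'I_n), j1 <= j2 <= j3 -> A i j1 -> A i j3 -> A i j2)
  /\ (forall (j : 'I_n) (i1 i2 i3 : 'I_m), i1 <= i2 <= i3 -> A i1 j -> A i3 j -> A i2 j).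

Definition convex_class (m n : nat) (R : 'I_m -> nat) (S : 'I_n -> nat) : Prop :=
  forall A : 'M[bool]_(m, n), inClass R S A -> convex A.

Definition right_shift (p : nat) (I I' : {set 'I_p}) : Prop :=
  exists k l : nat, k < l /\
    (forall j : 'I_p, j \in I <-> k <= j <= l) /\
    (forall j : 'I_p, j \in I' <-> k.+1 <= j <= l.+1).

Definition one_shift (p : nat) (I I' : {set 'I_p}) : Prop :=
  right_shift I I' \/ right_shift I' I.

From mathcomp Require Import all_boot all_order all_algebra zify.
Set Implicit Arguments. Unset Strict Implicit. Unset Printing Implicit Defensive.

(* An interchange keeps a matrix inside A(R,S), hence convex; so the horizontal
   intervals I = [a,b] and J = [c,d] of two rows stay intervals whenever a column
   of I \ J is traded for a column of J \ I.  If neither interval contains the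
   other, say a < c and b < d, trading a for d gives [a+1,b] + {d} and
   {a} + [c,d-1], which are intervals only if d = b+1 (when a < b) and c = a+1
   (when c < d); trading b for d, or a for c, shows that a < b iff c < d.  So
   either both rows have a single 1 or J is I shifted by one, and the shift
   preserves cardinality, which gives the inclusion statement.  Columns are the
   rows of the transpose. *)

Lemma card_exchange (T : finType) (X : {set T}) (x y : T) :
  x \in X -> y \notin X -> #|y |: (X :\ x)| = #|X|.
Proof.
by move=> xX yX; rewrite cardsU1 [in RHS](cardsD1 x) xX in_setD1 (negbTE yX) andbF.
Qed.

Lemma exchange_setE (T : finType) (X : {set T}) x y : x \in X -> y \notin X ->
  [set z | (z \in X) (+) ((z == x) || (z == y))] = y |: (X :\ x).
Proof.
move=> xX yX; apply/setP => z; rewrite !inE.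
have [-> | zx] := eqVneq z x.
  by rewrite xX orbF (negbTE (memPn yX x xX)).
by have [-> | zy] := eqVneq z y; rewrite /= ?(negbTE yX) ?addbF.
Qed.

Section Intervals.

Variable n : nat.
Implicit Types (I J X : {set 'I_n}) (a b c d j p q w x y z : 'I_n).

Definition is_interval X :=
  forall x y z, x <= y <= z -> x \in X -> z \in X -> y \in X.

(* Unlike [right_shift], the shifted interval must fit in ['I_n], so that it
   has the same cardinality as [I]. *)
Definition bounded_right_shift I J := exists k l : nat,
  [/\ k < l, l.+1 < n, forall j, (j \in I) = (k <= j <= l)
    & forall j, (j \in J) = (k.+1 <= j <= l.+1)].

Definition nested_or_shifted I J :=
  [\/ #|I| = 1 /\ #|J| = 1, I \subset J, J \subset I
    | bounded_right_shift I J \/ bounded_right_shift J I].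

Definition exchange_stable I J := forall x y, x \in I :\: J -> y \in J :\: I ->
  is_interval (y |: (I :\ x)) /\ is_interval (x |: (J :\ y)).

Lemma exchange_stable_sym I J : exchange_stable I J -> exchange_stable J I.
Proof. by move=> st x y xJI yIJ; have [] := st y x yIJ xJI. Qed.

Lemma is_interval_range X p : is_interval X -> p \in X ->
  exists a b, forall j, (j \in X) = (a <= j <= b).
Proof.
move=> cX pX.
have [a aX amin] := arg_minnP (fun j : 'I_n => val j) pX.
have [b bX bmax] := arg_maxnP (fun j : 'I_n => val j) pX.
exists a, b => j; apply/idP/idP => [jX | /andP[aj jb]].
  by apply/andP; split; [apply: amin | apply: bmax].
by apply: (cX a j b); rewrite ?aj.
Qed.

Lemma card_interval1 X a b :
  (forall j, (j \in X) = (a <= j <= b)) -> a = b :> nat -> #|X| = 1.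
Proof.
move=> memX ab; suff -> : X = [set a] by rewrite cards1.
apply/setP => j.
by rewrite inE memX; apply/idP/eqP => [jX | ->]; [apply: ord_inj | ]; lia.
Qed.

Lemma card_bounded_right_shift I J : bounded_right_shift I J -> #|I| = #|J|.
Proof.
move=> [k [l [_ ln memI memJ]]].
suff -> : I = @ordS n @^-1: J by rewrite card_preimset //; apply: ordS_inj.
apply/setP => j; rewrite inE memI memJ /=.
have := ltn_ord j; rewrite leq_eqVlt => /predU1P[jn | jn].
  by rewrite jn modnn; lia.
by rewrite modn_small.
Qed.

Lemma bounded_right_shiftW I J : bounded_right_shift I J -> right_shift I J.
Proof.
move=> [k [l [kl _ memI memJ]]]; exists k, l.
by split=> //; split=> j; rewrite (memI, memJ).
Qed.

Lemma mem_exchange_between X x y z w : is_interval (y |: (X :\ x)) ->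
  z \in X -> z != x :> nat -> (z <= w < y) || (y < w <= z) ->
  w \in X /\ w != x :> nat.
Proof.
move=> cX zX zx between.
have zX' : z \in y |: (X :\ x) by apply/setU1P; right; apply/setD1P.
have : w \in y |: (X :\ x).
  case/orP: between => /andP[lo hi].
    by apply: (cX z w y); rewrite ?lo ?(ltnW hi) ?setU11.
  by apply: (cX y w z); rewrite ?hi ?(ltnW lo) ?setU11.
by case/setU1P => [wy | /setD1P[]//]; move: between; rewrite wy; lia.
Qed.

Section CrossingIntervals.

Variables (I J : {set 'I_n}) (a b c d : 'I_n).
Hypotheses (memI : forall j, (j \in I) = (a <= j <= b))
  (memJ : forall j, (j \in J) = (c <= j <= d)).
Hypotheses (ab : a <= b) (cd : c <= d) (ac : a < c) (bd : b < d).
Hypothesis st : exchange_stable I J.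

Let aIJ : a \in I :\: J. Proof. by rewrite inE memI memJ; lia. Qed.
Let dJI : d \in J :\: I. Proof. by rewrite inE memI memJ; lia. Qed.

Lemma crossing_right_end : a < b -> d = b.+1 :> nat.
Proof.
move=> ltab; apply/eqP; rewrite eqn_leq bd andbT leqNgt; apply/negP => gap.
have [w wE] : exists w : 'I_n, w = b.+1 :> nat.
  by exists (Ordinal (ltn_trans gap (ltn_ord d))).
have := mem_exchange_between (z := b) (w := w) (st aIJ dJI).1.
by rewrite !memI; lia.
Qed.

Lemma crossing_left_end : c < d -> c = a.+1 :> nat.
Proof.
move=> ltcd; apply/eqP; rewrite eqn_leq ac andbT leqNgt; apply/negP => gap.
have [w wE] : exists w : 'I_n, w = a.+1 :> nat.
  by exists (Ordinal (ltn_trans gap (ltn_ord c))).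
have := mem_exchange_between (z := c) (w := w) (st aIJ dJI).2.
by rewrite !memJ; lia.
Qed.

Lemma crossing_nontrivial : (a < b) = (c < d).
Proof.
apply/idP/idP => [ltab | ltcd]; rewrite ltnNge; apply/negP => le.
- have bJI : b \in I :\: J by rewrite inE memI memJ; lia.
  have := mem_exchange_between (z := a) (w := b) (st bJI dJI).1.
  by rewrite !memI; lia.
- have cJI : c \in J :\: I by rewrite inE memI memJ; lia.
  have := mem_exchange_between (z := d) (w := c) (st aIJ cJI).2.
  by rewrite !memJ; lia.
Qed.

End CrossingIntervals.

Lemma exchange_stable_right_shift I J p q :
  is_interval I -> is_interval J -> exchange_stable I J ->
  p \in I :\: J -> q \in J :\: I -> p < q ->
  (#|I| = 1 /\ #|J| = 1) \/ bounded_right_shift I J.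
Proof.
move=> cI cJ st pIJ qJI pq.
have [a [b memI]] := is_interval_range cI (setDP pIJ).1.
have [c [d memJ]] := is_interval_range cJ (setDP qJI).1.
move: pIJ qJI; rewrite !inE !memI !memJ => pIJ qJI.
have ab : a <= b by lia.
have cd : c <= d by lia.
have ac : a < c by lia.
have bd : b < d by lia.
have nontriv := crossing_nontrivial memI memJ ab cd ac bd st.
case: (ltnP a b) => [ltab | leba].
- have dE := crossing_right_end memI memJ ab cd ac bd st ltab.
  have cE : c = a.+1 :> nat.
    by apply: (crossing_left_end memI memJ); rewrite // -nontriv.
  right; exists a, b; split=> //; first by rewrite -dE.
  by move=> j; rewrite memJ dE cE.
- have ledc : d <= c by rewrite leqNgt -nontriv -leqNgt.
  by left; split; [apply: (card_interval1 memI) | apply: (card_interval1 memJ)]; lia.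
Qed.

Lemma exchange_stable_nested_or_shifted I J :
  is_interval I -> is_interval J -> exchange_stable I J -> nested_or_shifted I J.
Proof.
move=> cI cJ st.
have [IJ | /subsetPn[p pI pJ]] := boolP (I \subset J); first by constructor 2.
have [JI | /subsetPn[q qJ qI]] := boolP (J \subset I); first by constructor 3.
have pIJ : p \in I :\: J by rewrite inE pI pJ.
have qJI : q \in J :\: I by rewrite inE qJ qI.
case: (ltngtP p q) => [pq | qp | pq].
- have [card1 | sh] := exchange_stable_right_shift cI cJ st pIJ qJI pq.
    by constructor 1.
  by constructor 4; left.
- have st' := exchange_stable_sym st.
  have [[cardJ cardI] | sh] := exchange_stable_right_shift cJ cI st' qJI pIJ qp.
    by constructor 1.
  by constructor 4; right.
- by move: qI; rewrite -(ord_inj pq) pI.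
Qed.

Lemma nested_or_shifted_cases I J : nested_or_shifted I J ->
  (#|I| = 1 /\ #|J| = 1) \/ (I \subset J \/ J \subset I) \/ one_shift I J.
Proof.
case=> [card1 | IJ | JI | [sh | sh]].
- by left.
- by right; left; left.
- by right; left; right.
- by right; right; left; apply: bounded_right_shiftW.
- by right; right; right; apply: bounded_right_shiftW.
Qed.

Lemma nested_or_shifted_subset I J k : nested_or_shifted I J ->
  1 <= k -> #|I| = k -> k.+1 <= #|J| -> I \subset J.
Proof.
case=> [[_ cardJ] | // | JI | [sh | sh]] k1 cardI ltIJ.
- by rewrite cardJ in ltIJ; lia.
- by have := subset_leq_card JI; lia.
- by have := card_bounded_right_shift sh; lia.
- by have := card_bounded_right_shift sh; lia.
Qed.

Lemma nested_or_shifted_crossing I J x y : nested_or_shifted I J ->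
  x \in I :\: J -> y \in J :\: I -> (#|I| = 1 /\ #|J| = 1) \/ one_shift I J.
Proof.
move=> /nested_or_shifted_cases[card1 | [[IJ | JI] | sh]] /setDP[xI xJ] /setDP[yJ yI].
- by left.
- by rewrite (subsetP IJ x xI) in xJ.
- by rewrite (subsetP JI y yJ) in yI.
- by right.
Qed.

End Intervals.

Lemma hint_tr m n (A : 'M[bool]_(m, n)) j : hint A^T j = vint A j.
Proof. by apply/setP => i; rewrite !inE mxE. Qed.

Lemma vint_tr m n (A : 'M[bool]_(m, n)) i : vint A^T i = hint A i.
Proof. by apply/setP => j; rewrite !inE mxE. Qed.

Lemma inClass_tr m n R S (A : 'M[bool]_(m, n)) : inClass R S A -> inClass S R A^T.
Proof. by move=> [rows cols]; split => x; rewrite ?hint_tr ?vint_tr. Qed.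

Lemma convex_tr m n (A : 'M[bool]_(m, n)) : convex A -> convex A^T.
Proof.
by move=> [rows cols]; split=> x y1 y2 y3 le; rewrite !mxE; [apply: cols | apply: rows].
Qed.

Lemma convex_class_tr m n (R : 'I_m -> nat) (S : 'I_n -> nat) :
  convex_class R S -> convex_class S R.
Proof.
move=> cc B /inClass_tr cB; rewrite -[B]trmxK; exact/convex_tr/cc.
Qed.

Lemma is_interval_hint m n (A : 'M[bool]_(m, n)) i : convex A -> is_interval (hint A i).
Proof. by move=> [rows _] x y z le; rewrite !inE; apply: rows. Qed.

Definition interchange m n (A : 'M[bool]_(m, n)) i1 i2 j1 j2 : 'M[bool]_(m, n) :=
  \matrix_(i, j) (A i j (+) (((i == i1) || (i == i2)) && ((j == j1) || (j == j2)))).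

Lemma trmx_interchange m n (A : 'M[bool]_(m, n)) i1 i2 j1 j2 :
  ((interchange A i1 i2 j1 j2)^T)%R = interchange A^T j1 j2 i1 i2.
Proof. by apply/matrixP => j i; rewrite !mxE andbC. Qed.

Section Interchange.

Variables (m n : nat) (A : 'M[bool]_(m, n)) (i1 i2 : 'I_m) (j1 j2 : 'I_n).
Hypotheses (a11 : A i1 j1) (a22 : A i2 j2).
Hypotheses (a12 : ~~ A i1 j2) (a21 : ~~ A i2 j1).

Local Notation B := (interchange A i1 i2 j1 j2).

Lemma hint_interchange1 : hint B i1 = j2 |: (hint A i1 :\ j1).
Proof.
rewrite -exchange_setE ?inE //.
by apply/setP => j; rewrite !inE mxE eqxx.
Qed.

Lemma hint_interchange2 : hint B i2 = j1 |: (hint A i2 :\ j2).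
Proof.
rewrite -exchange_setE ?inE //; apply/setP => j.
by rewrite !inE mxE eqxx orbT orbC.
Qed.

Lemma card_hint_interchange i : #|hint B i| = #|hint A i|.
Proof.
have [-> | i1i] := eqVneq i i1; first by rewrite hint_interchange1 card_exchange ?inE.
have [-> | i2i] := eqVneq i i2; first by rewrite hint_interchange2 card_exchange ?inE.
suff -> : hint B i = hint A i by [].
by apply/setP => j; rewrite !inE mxE (negbTE i1i) (negbTE i2i) addbF.
Qed.

End Interchange.

Lemma inClass_interchange m n R S (A : 'M[bool]_(m, n)) i1 i2 j1 j2 :
  A i1 j1 -> A i2 j2 -> ~~ A i1 j2 -> ~~ A i2 j1 ->
  inClass R S A -> inClass R S (interchange A i1 i2 j1 j2).
Proof.
move=> a11 a22 a12 a21 [rows cols]; split=> [i | j].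
  by rewrite card_hint_interchange.
by rewrite -hint_tr trmx_interchange card_hint_interchange ?mxE // hint_tr.
Qed.

Lemma hint_nested_or_shifted m n R S (A : 'M[bool]_(m, n)) i1 i2 :
  convex_class R S -> inClass R S A -> nested_or_shifted (hint A i1) (hint A i2).
Proof.
move=> cc cA; have cvA := cc _ cA.
apply: exchange_stable_nested_or_shifted; try exact: is_interval_hint.
move=> j1 j2; rewrite !inE => /andP[a21 a11] /andP[a12 a22].
have cvB := cc _ (inClass_interchange a11 a22 a12 a21 cA).
rewrite -(hint_interchange1 i2 a11 a12) -(hint_interchange2 i1 a22 a21).
by split; apply: is_interval_hint.
Qed.

Lemma vint_nested_or_shifted m n R S (A : 'M[bool]_(m, n)) j1 j2 :
  convex_class R S -> inClass R S A -> nested_or_shifted (vint A j1) (vint A j2).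
Proof.
move=> cc /inClass_tr cAT; rewrite -!hint_tr.
exact: hint_nested_or_shifted (convex_class_tr cc) cAT.
Qed.

Theorem mainTheorem9 (m n : nat) (R : 'I_m -> nat) (S : 'I_n -> nat) :
  convex_class R S ->
  (forall A : 'M[bool]_(m, n), inClass R S A ->
     (* rows *)
     (forall i1 i2 : 'I_m, i1 != i2 ->
        ((#|hint A i1| = 1 /\ #|hint A i2| = 1)
         \/ (hint A i1 \subset hint A i2 \/ hint A i2 \subset hint A i1)
         \/ one_shift (hint A i1) (hint A i2))
        /\ (forall k : nat, 1 <= k -> #|hint A i1| = k -> k.+1 <= #|hint A i2| ->
              hint A i1 \subset hint A i2))
     /\
     (* columns *)
     (forall j1 j2 : 'I_n, j1 != j2 ->
        ((#|vint A j1| = 1 /\ #|vint A j2| = 1)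
         \/ (vint A j1 \subset vint A j2 \/ vint A j2 \subset vint A j1)
         \/ one_shift (vint A j1) (vint A j2))
        /\ (forall k : nat, 1 <= k -> #|vint A j1| = k -> k.+1 <= #|vint A j2| ->
              vint A j1 \subset vint A j2)))
  /\
  (* interchanges: submatrix on rows i1,i2 and columns j1,j2 equal to I_2 (or its
     anti-diagonal version, covered by swapping the roles of j1 and j2) *)
  (forall A : 'M[bool]_(m, n), inClass R S A ->
     forall (i1 i2 : 'I_m) (j1 j2 : 'I_n), i1 != i2 -> j1 != j2 ->
       A i1 j1 -> A i2 j2 -> ~~ A i1 j2 -> ~~ A i2 j1 ->
       ((#|hint A i1| = 1 /\ #|hint A i2| = 1) \/ one_shift (hint A i1) (hint A i2))
       /\ ((#|vint A j1| = 1 /\ #|vint A j2| = 1) \/ one_shift (vint A j1) (vint A j2))).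
Proof.
move=> cc; split=> [A cA | A cA i1 i2 j1 j2 _ _ a11 a22 a12 a21].
  split=> [i1 i2 _ | j1 j2 _].
    have ns := hint_nested_or_shifted i1 i2 cc cA.
    by split; [exact: nested_or_shifted_cases | move=> k; exact: nested_or_shifted_subset].
  have ns := vint_nested_or_shifted j1 j2 cc cA.
  by split; [exact: nested_or_shifted_cases | move=> k; exact: nested_or_shifted_subset].
split.
  have ns := hint_nested_or_shifted i1 i2 cc cA.
  apply: (nested_or_shifted_crossing (x := j1) (y := j2) ns);
    by rewrite !inE ?a11 ?a22 ?a12 ?a21.
have ns := vint_nested_or_shifted j1 j2 cc cA.
apply: (nested_or_shifted_crossing (x := i1) (y := i2) ns);
  by rewrite !inE ?a11 ?a22 ?a12 ?a21.
Qed.
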